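(* In the Standing Setting, let $(p,B)$ be a flag with $p=(\alpha,\beta)$, let $c$ be the number of points of $B$ whose first coordinate is $\alpha$, and $d$ the number of points of $B$ whose second coordinate is $\beta$ (both counts include $p$). Then $k=\frac{(c+d-2)(\omega+1)}{2}+1$.
   Context: Standing Setting: $\mathcal{D}=(\Omega,\mathcal{B})$ is a non-trivial $2$-$(v,k,\lambda)$ design (every two distinct points in exactly $\lambda$ blocks, blocks of size $k$, $2<k<v$) with $b$ blocks and replication number $r$, satisfying $\lambda\ge (r,\lambda)^2$. $G\le\mathrm{Aut}(\mathcal{D})$ is flag-transitive (transitive on pairs $(p,B)$ with $p\in B\in\mathcal{B}$). Moreover $\Omega=\Delta\times\Delta$ with $|\Delta|=\omega\ge 5$ odd, so $v=\omega^2$, and $T\times T\trianglelefteq G\le T_0\wr \mathbb{Z}_2$ acting in product action (the $\mathbb{Z}_2$ interchanging the two coordinates), where $T_0\le\mathrm{Sym}(\Delta)$ is $2$-transitive with nonabelian simple socle $T$; $G$ has rank $3$ on $\Omega$. *)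

From mathcomp Require Import all_boot all_fingroup all_solvable.
Set Implicit Arguments.
Unset Strict Implicit.
Unset Printing Implicit Defensive.
Local Open Scope group_scope.

Section Defs.
Variable Delta : finType.
Local Notation Om := (prod Delta Delta).

Definition prodfun (g h : {perm Delta}) (u : Om) : Om := (g u.1, h u.2).

Lemma prodfun_inj g h : injective (prodfun g h).
Proof.
move=> [x1 y1] [x2 y2] /= [] /perm_inj -> /perm_inj -> //.
Qed.

Definition prodperm (g h : {perm Delta}) : {perm Om} := perm (@prodfun_inj g h).

Definition swapfun (u : Om) : Om := (u.2, u.1).
Lemma swapfun_inj : injective swapfun.
Proof. by move=> [x1 y1] [x2 y2] /= [] -> ->. Qed.
Definition swapperm : {perm Om} := perm swapfun_inj.

Definition base_group (T : {set {perm Delta}}) : {set {perm Om}} :=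
  [set prodperm g h | g in T, h in T].

Definition wreath_prod (T0 : {set {perm Delta}}) : {set {perm Om}} :=
  <<base_group T0 :|: [set swapperm]>>.

End Defs.

Definition socle (gT : finGroupType) (G : {set gT}) : {set gT} :=
  <<\bigcup_(N : {group gT} | (N \subset G) && minnormal N G) N>>.

Section Design.
Variable P : finType.

Definition is_2design (Bs : {set {set P}}) (k lam : nat) : Prop :=
  (0 < lam)%N /\
  (forall B, B \in Bs -> #|B| = k) /\
  (forall x y : P, x != y -> #|[set B in Bs | (x \in B) && (y \in B)]| = lam).

Definition repl_number (Bs : {set {set P}}) (r : nat) : Prop :=
  forall x : P, #|[set B in Bs | x \in B]| = r.

Definition is_aut_group (G : {set {perm P}}) (Bs : {set {set P}}) : Prop :=
  forall g B, g \in G -> B \in Bs -> [set g x | x in B] \in Bs.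

Definition flag_transitive (G : {set {perm P}}) (Bs : {set {set P}}) : Prop :=
  forall p B p' B', B \in Bs -> p \in B -> B' \in Bs -> p' \in B' ->
    exists2 g, g \in G & g p = p' /\ [set g x | x in B] = B'.

Definition rank3 (G : {set {perm P}}) : Prop :=
  [transitive G, on [set: P] | 'P] /\
  forall x : P, #|orbit 'P ('C_G[x | 'P]) @: [set: P]| = 3%N.

End Design.

From mathcomp Require Import all_boot all_fingroup all_solvable.
From mathcomp Require Import zify.
Set Implicit Arguments. Unset Strict Implicit.

(** Points of [Delta * Delta] are adjacent when they share a coordinate (the
  Hamming graph).  Every element of [T0 wr Z_2] in product action preserves
  adjacency, so for a point [p] the stabiliser [G_p] leaves invariant both
  the set [nbrs p] of neighbours of [p] (of size [2(w-1)], w = |Delta|) and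
  the set [non_nbrs p] of non-neighbours (of size [(w-1)^2]).

  For a flag-transitive 2-design, any [G_p]-invariant set [S] not containing
  [p] satisfies [lam * |S| = r * |B :&: S|] (double counting incident pairs
  through [p]); this is [flag_count].  For [S = nbrs p] and [S = non_nbrs p]
  it yields [2 |B :&: non_nbrs p| = (w-1) |B :&: nbrs p|], while [B] is the
  disjoint union of [p], [B :&: nbrs p] and [B :&: non_nbrs p], and
  [|B :&: nbrs p| = c + d - 2].  The formula for [k] follows by arithmetic;
  only flag-transitivity and [G <= T0 wr Z_2] are needed from the setting. *)

(** Count the pairs
    [(x, B')] with [x \in S] and [p, x \in B'] in two ways. *)
Lemma flag_count (P : finType) (Bs : {set {set P}}) k lam r
    (G : {set {perm P}}) p B (S : {set P}) :
  is_2design Bs k lam -> repl_number Bs r -> flag_transitive G Bs ->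
  B \in Bs -> p \in B -> p \notin S ->
  (forall g, g \in G -> g p = p -> forall q, (g q \in S) = (q \in S)) ->
  (lam * #|S| = r * #|B :&: S|)%N.
Proof.
move=> [_ [_ Hlam]] Hr Hflag HB Hp pS Sinv.
pose Bp := [set B' in Bs | p \in B'].
have by_points : (\sum_(x in S) \sum_(B' in Bp) (x \in B') = lam * #|S|)%N.
  rewrite mulnC -sum_nat_const; apply: eq_bigr => x xS.
  rewrite -big_mkcondr sum1_card -(Hlam p x); last first.
    by apply: contraNneq pS => ->.
  by apply: eq_card => B'; rewrite !inE -topredE /= /Bp inE andbA.
(* every block through [p] is the image of [B] under some element of [G_p],
   which fixes [S] setwise *)
have meet_B B' : B' \in Bp -> #|B' :&: S| = #|B :&: S|.
  rewrite inE => /andP [HB' pB'].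
  have [g gG [gp <-]] := Hflag p B p B' HB Hp HB' pB'.
  have gS : [set g x | x in S] = S.
    apply/eqP; rewrite eqEcard card_imset ?leqnn ?andbT; last exact: perm_inj.
    by apply/subsetP=> y /imsetP [x xS ->]; rewrite Sinv.
  rewrite -{1}gS -imsetI; last by move=> x y _ _; exact: perm_inj.
  by rewrite card_imset //; exact: perm_inj.
have by_blocks : (\sum_(B' in Bp) \sum_(x in S) (x \in B') = r * #|B :&: S|)%N.
  rewrite -(Hr p) -sum_nat_const; apply: eq_bigr => B' BpB'.
  rewrite -big_mkcondr sum1_card -(meet_B B' BpB').
  by apply: eq_card => x; rewrite !inE andbC.
by rewrite -by_points -by_blocks exchange_big.
Qed.

Section HammingGraph.
Variable D : finType.
Implicit Types (p q u v : D * D) (g : {perm D * D}).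

Definition adj u v : bool := (u.1 == v.1) || (u.2 == v.2).

Definition nbrs p : {set D * D} := [set q | adj p q] :\ p.
Definition non_nbrs p : {set D * D} := [set q | ~~ adj p q].

Definition adj_auts : {set {perm D * D}} :=
  [set g : {perm D * D} | [forall u, forall v, adj (g u) (g v) == adj u v]].

Lemma adj_auts_group : group_set adj_auts.
Proof.
apply/group_setP; split.
  by rewrite inE; apply/forallP=> u; apply/forallP=> v; rewrite !perm1.
move=> g h; rewrite !inE => /forallP Hg /forallP Hh.
apply/forallP=> u; apply/forallP=> v; rewrite !permM.
by rewrite (eqP (forallP (Hh _) _)) (eqP (forallP (Hg _) _)).
Qed.

Canonical adj_auts_grp := Group adj_auts_group.

Lemma wreath_prod_adj (T0 : {set {perm D}}) g u v :
  g \in wreath_prod T0 -> adj (g u) (g v) = adj u v.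
Proof.
suff /subsetP sub : wreath_prod T0 \subset adj_auts.
  by move/sub; rewrite inE => /forallP/(_ u)/forallP/(_ v)/eqP.
rewrite /wreath_prod gen_subG; apply/subsetP=> x; rewrite inE => /orP [].
  case/imset2P=> a b _ _ ->; rewrite inE.
  apply/forallP=> w; apply/forallP=> z; rewrite /adj !permE /prodfun /=.
  by rewrite !(inj_eq perm_inj).
rewrite inE => /eqP ->; rewrite inE.
by apply/forallP=> w; apply/forallP=> z; rewrite /adj !permE /swapfun /= orbC.
Qed.

Lemma adj_stab_nbrs g p q :
  (forall u v, adj (g u) (g v) = adj u v) -> g p = p ->
  (g q \in nbrs p) = (q \in nbrs p) /\ (g q \in non_nbrs p) = (q \in non_nbrs p).
Proof.
move=> gadj gp; have E : adj p (g q) = adj p q by rewrite -{1}gp gadj.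
by rewrite !inE E -{1}gp (inj_eq perm_inj).
Qed.

Lemma notin_nbrs p : p \notin nbrs p.
Proof. by rewrite !inE eqxx. Qed.

Lemma notin_non_nbrs p : p \notin non_nbrs p.
Proof. by rewrite !inE /adj !eqxx. Qed.

Lemma card_split_nbrs p (X : {set D * D}) : p \in X ->
  #|X| = (#|X :&: nbrs p| + #|X :&: non_nbrs p| + 1)%N.
Proof.
move=> pX; set A := [set q | adj p q].
have pA : p \in A by rewrite inE /adj !eqxx.
rewrite -(cardsID A X) (cardsD1 p (X :&: A)) inE pX pA /=.
have -> : (X :&: A) :\ p = X :&: nbrs p by apply/setP=> q; rewrite !inE andbCA.
have -> : X :\: A = X :&: non_nbrs p by apply/setP=> q; rewrite !inE andbC.
by rewrite -addnA addnC.
Qed.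

Lemma card_non_nbrs p : #|non_nbrs p| = ((#|D| - 1) * (#|D| - 1))%N.
Proof.
have -> : non_nbrs p = setX [set~ p.1] [set~ p.2].
  by apply/setP=> [[x y]]; rewrite !inE /adj negb_or !(eq_sym x) (eq_sym y).
by rewrite cardsX !cardsC1 subn1.
Qed.

Lemma card_nbrs p : #|nbrs p| = (2 * (#|D| - 1))%N.
Proof.
have := card_split_nbrs (in_setT p); rewrite !setTI cardsT card_prod.
rewrite card_non_nbrs; have := leq_pred #|D|; case: #|D| => [|w] _ /=; lia.
Qed.

(** The neighbours of [p] in a set [B] are its points on the row of [p] and on
    the column of [p], with [p] itself counted twice. *)
Lemma card_nbrs_row_col p (B : {set D * D}) : p \in B ->
  (#|B :&: nbrs p| + 2 =
   #|[set q in B | q.1 == p.1]| + #|[set q in B | q.2 == p.2]|)%N.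
Proof.
move=> pB; rewrite -cardsUI.
have -> : [set q in B | q.1 == p.1] :&: [set q in B | q.2 == p.2] = [set p].
  apply/setP=> q; rewrite !inE; apply/idP/idP.
    by case/andP=> /andP [_ e1] /andP [_ e2]; rewrite -pair_eqE /pair_eq e1 e2.
  by move/eqP->; rewrite pB !eqxx.
have -> : [set q in B | q.1 == p.1] :|: [set q in B | q.2 == p.2] =
          p |: (B :&: nbrs p).
  apply/setP=> q; rewrite !inE /adj (eq_sym p.1) (eq_sym p.2).
  case: (eqVneq q p) => [->|nqp]; first by rewrite pB !eqxx.
  by rewrite /= andb_orr.
by rewrite cardsU1 cards1 !inE eqxx andbF /= add1n addn1 addn2.
Qed.

End HammingGraph.

(** The arithmetic core: from [lam * 2(w-1) = r n1] and [lam (w-1)^2 = r n2]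
    we get [2 n2 = (w-1) n1], whence [n1 (w+1) / 2 = n1 + n2]. *)
Lemma nbrs_ratio_arith (lam r w n1 n2 : nat) : (0 < lam)%N -> (1 < w)%N ->
  (lam * (2 * (w - 1)) = r * n1)%N ->
  (lam * ((w - 1) * (w - 1)) = r * n2)%N ->
  ((n1 * (w + 1)) %/ 2 = n1 + n2)%N.
Proof.
move=> lam0 w1 D1 D2.
have [v wv] : exists v, w = v.+1 by exists w.-1; lia.
subst w; rewrite subn1 /= in D1 D2.
have E : (lam * (2 * v * n2) = lam * (v * v * n1))%N.
  by rewrite mulnA D1 mulnA D2 -!mulnA (mulnC n1).
move/eqP: E; rewrite eqn_mul2l (negbTE (lt0n_neq0 lam0)) /= => /eqP E.
have ratio : (2 * n2 = v * n1)%N.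
  apply/eqP; rewrite -(eqn_pmul2l (_ : 0 < v)%N); last by lia.
  by rewrite !mulnA (mulnC v 2) E.
have -> : (n1 * (v.+1 + 1) = 2 * (n1 + n2))%N.
  by rewrite [RHS]mulnDr ratio -mulnDl mulnC addn1 add2n.
by rewrite mulKn.
Qed.

Theorem lemma2p2
  (Delta : finType)
  (Bs : {set {set (Delta * Delta)}}) (k lam r : nat)
  (T0 : {group {perm Delta}}) (T : {group {perm Delta}})
  (G : {group {perm (Delta * Delta)}})
  (Hodd : odd #|Delta|) (H5 : (5 <= #|Delta|)%N)
  (Hdes : is_2design Bs k lam)
  (Hk : (2 < k < #|Delta| ^ 2)%N)
  (Hr : repl_number Bs r)
  (Hlam : (gcdn r lam ^ 2 <= lam)%N)
  (Haut : is_aut_group G Bs)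
  (Hflag : flag_transitive G Bs)
  (H2tr : [transitive^2 T0, on [set: Delta] | 'P])
  (HsocT : socle T0 = T)
  (HTsimple : simple T) (HTnab : ~~ abelian T)
  (HTTnorm : (base_group T <| G)%g)
  (HGwr : G \subset wreath_prod T0)
  (Hrank : rank3 G)
  (p : Delta * Delta) (B : {set (Delta * Delta)})
  (HB : B \in Bs) (Hp : p \in B) :
  let c := #|[set q in B | q.1 == p.1]| in
  let d := #|[set q in B | q.2 == p.2]| in
  k = ((c + d - 2) * (#|Delta| + 1)) %/ 2 + 1.
Proof.
move=> c d.
have stab g : g \in G -> g p = p -> forall q,
    (g q \in nbrs p) = (q \in nbrs p) /\ (g q \in non_nbrs p) = (q \in non_nbrs p).
  by move=> gG gp q; apply: adj_stab_nbrs gp => u v;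
     apply: wreath_prod_adj (subsetP HGwr _ gG).
have count_nbrs := flag_count Hdes Hr Hflag HB Hp (notin_nbrs p)
  (fun g gG gp q => (stab g gG gp q).1).
have count_non := flag_count Hdes Hr Hflag HB Hp (notin_non_nbrs p)
  (fun g gG gp q => (stab g gG gp q).2).
rewrite card_nbrs in count_nbrs; rewrite card_non_nbrs in count_non.
have lam0 : (0 < lam)%N by case: Hdes.
have <- : #|B| = k by case: Hdes => _ [-> ].
have -> : (c + d - 2 = #|B :&: nbrs p|)%N.
  by rewrite -(card_nbrs_row_col Hp) addnK.
rewrite (card_split_nbrs Hp) (nbrs_ratio_arith lam0 _ count_nbrs count_non) //.
by apply: leq_trans H5.
Qed.
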